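(* Let $q$ be a prime, $n\ge 1$, and let $f:\mathbb{Z}_q^n\to\mathbb{C}$ be any function. Then $$\sum_{k=0}^n\frac{\widehat{A}_k[f]}{(q-1)^k\binom{n}{k}}=\frac{(n+1)(q-1)}{q^{1+n/2}}\sum_{m=0}^n\frac{A_m[f]}{m+1}\left(1-\frac{(-1)^{m+1}}{(q-1)^{m+1}}\right).$$
   Context: For $x=(x_1,\dots,x_n)\in\mathbb{Z}_q^n$ (identified with $GF(q)^n$), the weight ${\rm wt}(x)$ is the number of nonzero coordinates. The inner product is $(x,z)=\sum_i x_iz_i \bmod q$. The Fourier transform of $f$ is $\widehat{f}(z)=q^{-n/2}\sum_{x\in\mathbb{Z}_q^n}f(x)\,\omega^{(x,z)}$ with $\omega=e^{2\pi i/q}$. Define $A_k[f]=\sum_{z:\,{\rm wt}(z)=k}f(z)$ and $\widehat{A}_k[f]=\sum_{z:\,{\rm wt}(z)=k}\widehat{f}(z)$. *)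

From HB Require Import structures.
From mathcomp Require Import all_boot all_order all_algebra all_field.
From mathcomp Require Import reals trigo.
From mathcomp Require Import complex.
Set Implicit Arguments. Unset Strict Implicit. Unset Printing Implicit Defensive.
Import Order.TTheory GRing.Theory Num.Theory.
Local Open Scope ring_scope.
Local Open Scope complex_scope.

Notation Cplx R := (complex R).

Section Fourier.
Variables (R : realType) (q n : nat).

(* Vectors of Z_q^n, q prime, represented by 'F_q (= Z/qZ for prime q). *)
Definition vec := {ffun 'I_n -> 'F_q}.

Definition wt (x : vec) : nat := #|[set i | x i != 0]|.

Definition ip (x z : vec) : 'F_q := \sum_(i < n) x i * z i.

Definition omega : Cplx R :=
  (cos (2 * pi / q%:R) +i* sin (2 * pi / q%:R)).

Definition fhat (f : vec -> Cplx R) (z : vec) : Cplx R :=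
  ((Num.sqrt (q%:R ^+ n : R))^-1)%:C *
  \sum_(x : vec) f x * omega ^+ (nat_of_ord (ip x z)).

Definition Ak (f : vec -> Cplx R) (k : nat) : Cplx R :=
  \sum_(z : vec | wt z == k) f z.

Definition Ahatk (f : vec -> Cplx R) (k : nat) : Cplx R :=
  Ak (fhat f) k.

End Fourier.

From HB Require Import structures.
From mathcomp Require Import all_boot all_order all_algebra all_field.
From mathcomp Require Import reals trigo complex.
From mathcomp Require Import ring.
Set Implicit Arguments. Unset Strict Implicit. Unset Printing Implicit Defensive.
Import Order.TTheory GRing.Theory Num.Theory.
Local Open Scope ring_scope.
Local Open Scope complex_scope.

(* The weight 1/((q-1)^k C(n,k)) is the Beta integral
   (n+1) \int_0^1 (t/(q-1))^k (1-t)^(n-k) dt, and for fixed t the integrand,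
   evaluated at a vector z of weight k, is a product over the coordinates of z
   of p_t(z_i), where p_t(0) = 1 - t and p_t(a) = t/(q-1) for a <> 0.  The
   Fourier transform of the weight therefore factorises coordinatewise: a
   coordinate contributes \sum_a omega^(x_i a) p_t(a), which is 1 if x_i = 0 and
   1 - q t/(q-1) otherwise.  So the transform at x is
   (n+1) \int_0^1 (1 - q t/(q-1))^(wt x) dt, a closed form depending on wt x
   only.  Integration over [0, 1] is the formal linear functional int01 on
   polynomials. *)

Section CharacterSums.
Variables (F : fieldType) (p : nat) (zeta : F).
Hypotheses (p_prime : prime p) (zeta_order : zeta ^+ p = 1).
Hypothesis zeta_neq1 : zeta != 1.

Definition Fp_char (a : 'F_p) : F := zeta ^+ a.

Lemma Fp_char0 : Fp_char 0 = 1.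
Proof. exact: expr0. Qed.

Lemma Fp_charD a b : Fp_char (a + b) = Fp_char a * Fp_char b.
Proof.
have zeta_order' : zeta ^+ (Zp_trunc (pdiv p)).+2 = 1 by rewrite Fp_cast.
by rewrite /Fp_char -exprD -[in RHS](expr_mod _ zeta_order').
Qed.

Lemma Fp_char_sum (I : finType) (G : I -> 'F_p) :
  Fp_char (\sum_i G i) = \prod_i Fp_char (G i).
Proof. exact: (big_morph _ Fp_charD Fp_char0). Qed.

Lemma sum_Fp_char : \sum_a Fp_char a = 0.
Proof.
have := subrX1 zeta (Zp_trunc (pdiv p)).+2.
rewrite {1}Fp_cast // zeta_order subrr => /esym/eqP.
by rewrite mulf_eq0 subr_eq0 (negbTE zeta_neq1) => /eqP.
Qed.

Lemma sum_Fp_charM c : c != 0 -> \sum_a Fp_char (c * a) = 0.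
Proof.
by move=> c_neq0; rewrite -[RHS]sum_Fp_char [RHS](reindex_inj (mulfI c_neq0)).
Qed.

Lemma sum_nz_Fp_charM c :
  \sum_(a | a != 0) Fp_char (c * a) = if c == 0 then p.-1%:R else -1.
Proof.
have [-> | c_neq0] := eqVneq c 0.
  under eq_bigr do rewrite mul0r Fp_char0.
  by rewrite sumr_const cardC1 card_Fp.
have := sum_Fp_charM c_neq0; rewrite (bigD1 0) //= mulr0 Fp_char0 => /eqP.
by rewrite addrC addr_eq0 => /eqP.
Qed.

End CharacterSums.

Section IntegralOverUnitInterval.
Variable F : numFieldType.

Definition int01 (P : {poly F}) : F := \sum_(i < size P) P`_i / i.+1%:R.

Lemma int01E N (P : {poly F}) :
  (size P <= N)%N -> int01 P = \sum_(i < N) P`_i / i.+1%:R.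
Proof.
move=> le_P_N; rewrite /int01 (big_ord_widen N (fun i => P`_i / i.+1%:R)) //.
rewrite big_mkcond; apply: eq_bigr => i _.
by case: ltnP => // /(nth_default 0) ->; rewrite mul0r.
Qed.

Fact int01_is_semilinear : semilinear_for *%R int01.
Proof.
split=> [c P | P Q].
  rewrite (int01E (size_scale_leq c P)) /int01 mulr_sumr.
  by apply: eq_bigr => i _; rewrite coefZ mulrA.
have [leP leQ] := (leq_maxl (size P) (size Q), leq_maxr (size P) (size Q)).
rewrite (int01E (size_polyD P Q)) (int01E leP) (int01E leQ) -big_split.
by apply: eq_bigr => i _; rewrite coefD mulrDl.
Qed.

HB.instance Definition _ :=
  GRing.isSemilinear.Build F {poly F} F _ int01 int01_is_semilinear.

Lemma int01Xn k : int01 'X^k = k.+1%:R^-1.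
Proof.
rewrite (@int01E k.+1) ?size_polyXn // big_ord_recr /= coefXn eqxx mul1r.
by rewrite big1 ?add0r // => i _; rewrite coefXn ltn_eqF ?mul0r.
Qed.

Lemma int01_beta a b :
  int01 ('X^a * (1 - 'X) ^+ b) = (a`! * b`!)%:R / (a + b).+1`!%:R.
Proof.
have fact_neq0 k : k`!%:R != 0 :> F by rewrite pnatr_eq0 -lt0n fact_gt0.
elim: b a => [|b IHb] a.
  rewrite mulr1 int01Xn addn0 muln1 factS natrM invfM mulrCA mulfV //.
  by rewrite mulr1.
have -> : 'X^a * (1 - 'X) ^+ b.+1
    = 'X^a * (1 - 'X) ^+ b - 'X^(a.+1) * (1 - 'X) ^+ b :> {poly F}.
  by rewrite exprS mulrCA mulrBl mul1r mulrA -exprS.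
rewrite raddfB /= !IHb addnS addSn !factS !natrM.
by field; rewrite fact_neq0 -!natrD nat1r !pnatr_eq0.
Qed.

Lemma int01_bernstein n k : (k <= n)%N ->
  n.+1%:R * int01 ('X^k * (1 - 'X) ^+ (n - k)) = 'C(n, k)%:R^-1.
Proof.
move=> le_k_n; rewrite int01_beta subnKC // factS -(bin_fact le_k_n) !natrM.
have fact_neq0 j : j`!%:R != 0 :> F by rewrite pnatr_eq0 -lt0n fact_gt0.
have bin_neq0 : 'C(n, k)%:R != 0 :> F by rewrite pnatr_eq0 -lt0n bin_gt0.
by field; rewrite bin_neq0 !fact_neq0 nat1r pnatr_eq0.
Qed.

Lemma int01_binomial m (y : F) :
  m.+1%:R * y * int01 ((1 + y *: 'X) ^+ m) = (1 + y) ^+ m.+1 - 1.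
Proof.
rewrite addrC exprD1n raddf_sum mulr_sumr /=.
rewrite [1 + y]addrC exprD1n [in RHS]big_ord_recl expr0 bin0 mulr1n.
rewrite addrAC subrr add0r.
apply: eq_bigr => i _; rewrite exprZn -scaler_nat scalerA linearZ /= int01Xn.
have binS : 'C(m.+1, i.+1)%:R = m.+1%:R * 'C(m, i)%:R / i.+1%:R :> F.
  by rewrite -natrM mul_bin_diag natrM mulrC mulKf // pnatr_eq0.
rewrite /bump /= add1n exprS -[RHS]mulr_natr binS.
by field; rewrite nat1r pnatr_eq0.
Qed.

End IntegralOverUnitInterval.

Lemma sum_by_level_sets (T : finType) (V : nmodType) N (w : T -> nat)
    (G : T -> nat -> V) :
  (forall x, w x < N)%N ->
  \sum_(k < N) \sum_(x | w x == k) G x k = \sum_x G x (w x).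
Proof.
move=> w_lt_N; rewrite (exchange_big_dep xpredT) //=; apply: eq_bigr => x _.
by rewrite (big_pred1 (Ordinal (w_lt_N x))) // => k /=.
Qed.

Section KrawtchoukWeights.
Variables (F : numFieldType) (q n : nat) (zeta : F).
Hypotheses (q_prime : prime q) (zeta_order : zeta ^+ q = 1).
Hypothesis zeta_neq1 : zeta != 1.

Local Notation chi := (@Fp_char F q zeta).
Local Notation Q := (q.-1%:R : F).

Lemma Q_neq0 : Q != 0.
Proof. by rewrite pnatr_eq0 -lt0n -ltnS prednK ?prime_gt1 ?prime_gt0. Qed.

Lemma natr_q : q%:R = Q + 1 :> F.
Proof. by rewrite natr1 prednK ?prime_gt0. Qed.

Lemma wt_le (z : vec q n) : (wt z <= n)%N.
Proof. by rewrite /wt -[n in (_ <= n)%N]card_ord max_card. Qed.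

Definition prob_coord (a : 'F_q) : {poly F} :=
  if a == 0 then 1 - 'X else Q^-1 *: 'X.

Definition prob_vec (z : vec q n) : {poly F} := \prod_i prob_coord (z i).

Lemma prob_vecE z :
  prob_vec z = Q ^- wt z *: ('X^(wt z) * (1 - 'X) ^+ (n - wt z)).
Proof.
have card_nz : #|[pred i | z i != 0]| = wt z by rewrite /wt cardsE.
have card_z : #|[pred i | z i == 0]| = (n - wt z)%N.
  rewrite -card_nz -[n in (n - _)%N]card_ord -(cardC [pred i | z i != 0]) addKn.
  by apply: eq_card => i; rewrite !inE negbK.
rewrite /prob_vec (bigID [pred i | z i == 0]) /= mulrC.
rewrite (eq_bigr (fun=> Q^-1 *: 'X)) => [|i /negbTE]; last first.
  by rewrite /prob_coord => ->.
rewrite [X in _ * X](eq_bigr (fun=> 1 - 'X)) => [|i]; last first.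
  by rewrite /prob_coord => ->.
by rewrite !prodr_const card_nz card_z exprZn -scalerAl exprVn.
Qed.

Lemma int01_prob_vec z :
  n.+1%:R * int01 (prob_vec z) = (Q ^+ wt z * 'C(n, wt z)%:R)^-1.
Proof.
by rewrite prob_vecE linearZ /= mulrCA int01_bernstein ?wt_le // invfM.
Qed.

Lemma sum_chi_prob_coord c :
  \sum_a (chi (c * a))%:P * prob_coord a
    = if c == 0 then 1 else 1 - (q%:R / Q) *: 'X.
Proof.
rewrite (bigD1 0) //= /prob_coord eqxx mulr0 Fp_char0 mul1r.
rewrite (eq_bigr (fun a => (chi (c * a))%:P * (Q^-1 *: 'X)))
  => [|a /negbTE -> //].
rewrite -big_distrl -rmorph_sum sum_nz_Fp_charM //= mul_polyC scalerA.
case: eqP => _; first by rewrite mulfV ?Q_neq0 // scale1r subrK.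
rewrite natr_q mulrDl mulfV ?Q_neq0 // mul1r mulN1r scaleNr -addrA -opprD.
by rewrite scalerDl scale1r addrC.
Qed.

Lemma sum_chi_ip_prob_vec (x : vec q n) :
  \sum_z chi (ip x z) *: prob_vec z = (1 - (q%:R / Q) *: 'X) ^+ wt x.
Proof.
transitivity
  (\sum_(z : vec q n) \prod_i ((chi (x i * z i))%:P * prob_coord (z i))).
  apply: eq_bigr => z _.
  by rewrite /ip Fp_char_sum // -mul_polyC rmorph_prod -big_split.
rewrite -(bigA_distr_bigA (fun i a => (chi (x i * a))%:P * prob_coord a)) /=.
under eq_bigr do rewrite sum_chi_prob_coord.
rewrite (bigID [pred i | x i == 0]) /= big1 => [|i /eqP ->] //.
rewrite mul1r (eq_bigr (fun=> 1 - (q%:R / Q) *: 'X)) => [|i /negbTE ->] //.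
by rewrite prodr_const /wt cardsE.
Qed.

Lemma sum_chi_ip_weight (x : vec q n) :
  \sum_z chi (ip x z) / (Q ^+ wt z * 'C(n, wt z)%:R)
    = (n.+1 * q.-1)%:R / q%:R
      * ((wt x).+1%:R^-1 * (1 - (-1) ^+ (wt x).+1 / Q ^+ (wt x).+1)).
Proof.
have q_neq0 : q%:R != 0 :> F by rewrite pnatr_eq0 -lt0n prime_gt0.
have y_neq0 : q%:R / Q != 0 by rewrite mulf_neq0 ?invr_eq0 ?Q_neq0.
under eq_bigr do rewrite -int01_prob_vec mulrCA -linearZ.
rewrite -mulr_sumr -raddf_sum /= sum_chi_ip_prob_vec; set m := wt x.
have := int01_binomial m (- (q%:R / Q)).
have -> : 1 - q%:R / Q = - Q^-1.
  by rewrite natr_q mulrDl mulfV ?Q_neq0 // mul1r opprD addNKr.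
rewrite scaleNr -[- Q^-1]mulN1r exprMn exprVn => int01_eq.
have -> : int01 ((1 - (q%:R / Q) *: 'X) ^+ m)
    = ((-1) ^+ m.+1 / Q ^+ m.+1 - 1) / (m.+1%:R * - (q%:R / Q)).
  by rewrite -int01_eq [RHS]mulrC mulKf // mulf_neq0 ?oppr_eq0 ?pnatr_eq0.
by rewrite natrM; field; rewrite expf_neq0 Q_neq0 ?q_neq0 // nat1r pnatr_eq0.
Qed.

End KrawtchoukWeights.

Section Omega.
Variable R : realType.

Lemma omegaX q k : omega R q ^+ k
  = cos (k%:R * (2 * pi / q%:R)) +i* sin (k%:R * (2 * pi / q%:R)).
Proof.
elim: k => [|k IHk]; first by rewrite expr0 !mul0r cos0 sin0.
rewrite exprS IHk /omega; set t := 2 * pi / q%:R.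
rewrite -[k.+1%:R]natr1 mulrDl mul1r.
by congr (_ +i* _); rewrite [in RHS]addrC ?cosD // sinD addrC.
Qed.

Lemma omega_order q : (0 < q)%N -> omega R q ^+ q = 1.
Proof.
move=> q_gt0; rewrite omegaX mulrCA mulfV ?pnatr_eq0 -?lt0n // mulr1.
by rewrite mulr_natl cos2pi sin2pi.
Qed.

Lemma omega_neq1 q : (1 < q)%N -> omega R q != 1.
Proof.
move=> q_gt1; apply/eqP => /(congr1 (@complex.Re R)) /= cos_eq1.
have q_gt0 : (0 : R) < q%:R by rewrite ltr0n ltnW.
have theta_gt0 : 0 < 2 * pi / q%:R :> R by rewrite divr_gt0 ?mulr_gt0 ?pi_gt0.
have theta_le_pi : 2 * pi / q%:R <= pi :> R.
  by rewrite ler_pdivrMr // mulrC ler_pM2l ?pi_gt0 ?ler_nat.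
have := @cos_inj R (2 * pi / q%:R) 0.
rewrite !in_itv /= lexx (ltW theta_gt0) (ltW (pi_gt0 R)) theta_le_pi cos0.
by move=> /(_ isT isT cos_eq1) theta_eq0; rewrite theta_eq0 ltxx in theta_gt0.
Qed.

End Omega.

Theorem lemma1 (R : realType) (q n : nat) (f : vec q n -> Cplx R) :
  prime q -> (1 <= n)%N ->
  \sum_(k < n.+1)
     Ahatk f k / ((q.-1)%:R ^+ k * ('C(n, k))%:R)
  = ((n.+1 * q.-1)%:R / (q%:R * (Num.sqrt (q%:R ^+ n : R))%:C)) *
    \sum_(m < n.+1)
      Ak f m / (m.+1)%:R *
      (1 - (-1) ^+ m.+1 / (q.-1)%:R ^+ m.+1).
Proof.
(* The identity holds for n = 0 as well. *)
move=> q_prime _; have q_gt1 := prime_gt1 q_prime.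
have wt_lt (z : vec q n) : (wt z < n.+1)%N by rewrite ltnS wt_le.
rewrite /Ahatk /Ak.
under eq_bigr do rewrite mulr_suml.
under [in RHS]eq_bigr do rewrite !mulr_suml.
rewrite (sum_by_level_sets
  (fun z k => fhat f z / (q.-1%:R ^+ k * 'C(n, k)%:R)) wt_lt).
rewrite (sum_by_level_sets
  (fun x m => f x / m.+1%:R * (1 - (-1) ^+ m.+1 / q.-1%:R ^+ m.+1)) wt_lt).
under eq_bigr do rewrite /fhat -mulrA mulr_suml.
rewrite -mulr_sumr exchange_big /=.
under eq_bigr => x _.
  rewrite -(eq_bigr _ (fun z _ => mulrA (f x) _ _)) -mulr_sumr.
  rewrite (sum_chi_ip_weight q_prime (omega_order R (ltnW q_gt1))
                                     (omega_neq1 R q_gt1)).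
  over.
have sqrt_neq0 : (Num.sqrt (q%:R ^+ n : R))%:C != 0.
  by rewrite (inj_eq (@complexI R)) sqrtr_eq0 -ltNge exprn_gt0 // ltr0n ltnW.
rewrite (fmorphV (real_complex R)) !mulr_sumr; apply: eq_bigr => x _ /=.
rewrite natrM; field.
by rewrite sqrt_neq0 expf_neq0 ?Q_neq0 // nat1r !pnatr_eq0 /= -lt0n prime_gt0.
Qed.
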